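(* Suppose the weights satisfy the discrete Pearson equations $\theta(k+1)w^{(a)}(k+1)=\sigma^{(a)}(k)w^{(a)}(k)$, $k\in\mathbb N_0$, $a\in\{1,2\}$, where $\theta,\sigma^{(1)},\sigma^{(2)}$ are polynomials, $\theta(0)=0$, $\deg\theta=N$ and $\max(\deg\sigma^{(1)},\deg\sigma^{(2)})=M$. Then the Laguerre--Freud matrix $\Psi:=\Pi^{-1}\theta(T)$ is a banded matrix with lower bandwidth $2M$ and upper bandwidth $N$, i.e. $\Psi=(\Lambda^\top)^{2M}\psi^{(-2M)}+\cdots+\psi^{(N)}\Lambda^N$ with diagonal matrices $\psi^{(j)}$, and the following connection formulas hold: \[ \theta(z)B(z-1)=\Psi B(z),\qquad (A^{(a)}(z+1))^\top\sigma^{(a)}(z)=(A^{(a)}(z))^\top\Psi,\quad a\in\{1,2\}. \]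
   Context: Let $w^{(1)},w^{(2)}:\mathbb N_0\to\mathbb C$ be weights, $X(x)=(1,x,x^2,\dots)^\top$, $X^{(1)}(x)=(1,0,x,0,x^2,\dots)^\top$, $X^{(2)}(x)=(0,1,0,x,0,\dots)^\top$, and $\mathscr M=\sum_k X(k)(w^{(1)}(k)X^{(1)}(k)+w^{(2)}(k)X^{(2)}(k))^\top$ the moment matrix (series absolutely convergent). Assume all leading principal minors of $\mathscr M$ are nonzero, so $\mathscr M=S^{-1}H\tilde S^{-\top}$ with $S,\tilde S$ lower unitriangular and $H$ diagonal. Type II polynomials: $B=SX$; type I polynomials: $A^{(a)}=H^{-1}\tilde SX^{(a)}$. $\Lambda$ has ones on the first superdiagonal; $T=S\Lambda S^{-1}$ (so $TB(z)=zB(z)$). $L$ is the Pascal matrix $L_{n,m}=\binom nm$ for $n\ge m$, and $\Pi^{-1}=SL^{-1}S^{-1}$. *)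

From HB Require Import structures.
From mathcomp Require Import all_boot all_order all_algebra.
From mathcomp Require Import boolp classical_sets reals topology normedtype sequences.
From mathcomp Require Import complex.

Set Implicit Arguments.
Unset Strict Implicit.
Unset Printing Implicit Defensive.

Import Order.TTheory GRing.Theory Num.Theory.
Import numFieldTopology.Exports numFieldNormedType.Exports.
Local Open Scope ring_scope.
Local Open Scope complex_scope.

Section Defs.
Variable R : realType.
Local Notation C := R[i].

Definition imat := nat -> nat -> C.
Definition ivec := nat -> C.

Definition cmod (z : C) : R := Num.sqrt (complex.Re z ^+ 2 + complex.Im z ^+ 2).

Definition abs_summable (u : nat -> C) : Prop :=
  cvgn (series (fun k => cmod (u k))).

Definition csum (u : nat -> C) : C :=
  (limn (series (fun k => complex.Re (u k)))) +i* (limn (series (fun k => complex.Im (u k)))).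

Definition fin_supp (u : nat -> C) : Prop :=
  exists N : nat, forall j, (N <= j)%N -> u j = 0.

(* sum of a finitely supported sequence; (junk value 0 otherwise) *)
Definition fsum (u : nat -> C) : C :=
  match pselect (fin_supp u) with
  | left h => \sum_(j < projT1 (cid h)) u j
  | right _ => 0
  end.

(* product of infinite matrices (meaningful for row-finite left factors) *)
Definition mmul (A B : imat) : imat := fun n m => fsum (fun j => A n j * B j m).
Definition mvmul (A : imat) (v : ivec) : ivec := fun n => fsum (fun j => A n j * v j).
Definition vmmul (v : ivec) (A : imat) : ivec := fun m => fsum (fun n => v n * A n m).

Definition idm : imat := fun n m => (n == m)%:R.
Definition trm (A : imat) : imat := fun n m => A m n.
Definition mpow (A : imat) (k : nat) : imat := iter k (mmul A) idm.
Definition polymx (p : {poly C}) (A : imat) : imat :=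
  fun n m => \sum_(i < size p) p`_i * mpow A i n m.

Definition trunc (A : imat) (n : nat) : 'M[C]_n := \matrix_(i < n, j < n) A i j.

(* inverse of an (invertible) lower triangular infinite matrix, computed on
   finite leading truncations *)
Definition ltinv (A : imat) : imat :=
  fun n m => (invmx (trunc A (maxn n m).+1)) (inord n) (inord m).

Definition lower_unitriangular (A : imat) : Prop :=
  forall n m, ((n < m)%N -> A n m = 0) /\ A n n = 1.
Definition diagonal_mx (A : imat) : Prop :=
  forall n m, n != m -> A n m = 0.

Definition Lam : imat := fun n m => (m == n.+1)%:R.
Definition pascal : imat := fun n m => ('C(n, m))%:R.

Definition Xv (x : C) : ivec := fun n => x ^+ n.
Definition X1v (x : C) : ivec := fun n => if odd n then 0 else x ^+ n./2.
Definition X2v (x : C) : ivec := fun n => if odd n then x ^+ n./2 else 0.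

Definition moment_term (w1 w2 : nat -> C) (n m : nat) : nat -> C :=
  fun k => (k%:R : C) ^+ n * (w1 k * X1v k%:R m + w2 k * X2v k%:R m).
Definition moment (w1 w2 : nat -> C) : imat :=
  fun n m => csum (moment_term w1 w2 n m).

Definition Jacobi (S : imat) : imat := mmul (mmul S Lam) (ltinv S).
Definition Piinv (S : imat) : imat := mmul (mmul S (ltinv pascal)) (ltinv S).
Definition LFmatrix (S : imat) (theta : {poly C}) : imat :=
  mmul (Piinv S) (polymx theta (Jacobi S)).

Definition typeII (S : imat) (z : C) : ivec := mvmul S (Xv z).
Definition typeI (H St : imat) (Xa : C -> ivec) (z : C) : ivec :=
  mvmul (mmul (ltinv H) St) (Xa z).

End Defs.

From HB Require Import structures.
From mathcomp Require Import all_boot all_order all_algebra.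
From mathcomp Require Import boolp classical_sets reals topology normedtype sequences.
From mathcomp Require Import complex functions.
From mathcomp Require Import zify ring.

(* Since T = S Lam S^-1 and Pi^-1 = S L^-1 S^-1, conjugation by S gives Psi = S Q S^-1
   with Q = L^-1 theta(Lam).  As Lam X(z) = z X(z) and L X(z) = X(z + 1), Q maps X(z) to
   theta(z) X(z - 1): this is the type II formula, and Q has upper bandwidth N.  Summing by
   parts with the Pearson equations (the boundary term vanishes because theta(0) = 0) gives
   Q Mom = Mom U^T for the banded matrix U with U X^(a)(z) = sigma^(a)(z) X^(a)(z + 1).
   Inserting Mom = S^-1 H St^-T turns S Q S^-1 into H St^-T U^T St^T H^-1, which has lower
   bandwidth 2M and, multiplied on the left by A^(a)(z)^T = X^(a)(z)^T St^T H^-1, yields the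
   type I formulas. *)

Set Implicit Arguments.
Unset Strict Implicit.
Unset Printing Implicit Defensive.

Import Order.TTheory GRing.Theory Num.Theory.
Import numFieldTopology.Exports numFieldNormedType.Exports.
Local Open Scope ring_scope.
Local Open Scope complex_scope.

Section LaguerreFreud.

Variable R : realType.
Local Notation C := R[i].
Local Notation imat := (imat R).
Implicit Types (A B D S U X Y : imat) (u v : nat -> C) (x : ivec R).

(** * Row-finite products of infinite matrices *)

Lemma fsumE u K : (forall j, (K <= j)%N -> u j = 0) -> fsum u = \sum_(j < K) u j.
Proof.
have widen K1 K2 : (K1 <= K2)%N -> (forall j, (K1 <= j)%N -> u j = 0) ->
    \sum_(j < K1) u j = \sum_(j < K2) u j.
  move=> le uz; rewrite (big_ord_widen K2 u le) big_mkcond /=.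
  by apply: eq_bigr => j _; case: ltnP => // /uz.
move=> uz; rewrite /fsum; case: pselect => [h|[]]; last by exists K.
case: (cid h) => K' uz' /=; case: (leqP K K') => le; first by rewrite (widen _ _ le uz).
by rewrite (widen _ _ (ltnW le) uz').
Qed.

Lemma fsum0 u : (forall j, u j = 0) -> fsum u = 0.
Proof. by move=> u0; rewrite (fsumE (K:=0)) ?big_ord0. Qed.

Lemma fsumZ c u : fsum (fun j => c * u j) = c * fsum u.
Proof.
have [->|c0] := eqVneq c 0; first by rewrite mul0r fsum0 // => j; rewrite mul0r.
case: (pselect (fin_supp u)) => [[K uK]|not_fin].
  rewrite (fsumE uK) (fsumE (K:=K)) ?mulr_sumr // => j /uK ->; exact: mulr0.
have not_fin' : ~ fin_supp (fun j => c * u j).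
  case=> K cuK; apply: not_fin; exists K => j /cuK /eqP.
  by rewrite mulf_eq0 (negbTE c0) => /eqP.
by rewrite /fsum; do 2!case: pselect => // _; rewrite mulr0.
Qed.

Lemma fsum_delta p u : fsum (fun j => (j == p)%:R * u j) = u p.
Proof.
rewrite (fsumE (K:=p.+1)) => [|j hj]; last by rewrite gtn_eqF ?mul0r.
by rewrite big_ord_recr /= eqxx mul1r big1 ?add0r // => j _; rewrite ltn_eqF ?mul0r.
Qed.

Definition upper_banded A a := forall n m, (n + a < m)%N -> A n m = 0.
Definition lower_banded A a := forall n m, (m + a < n)%N -> A n m = 0.

Lemma upper_banded_le A a b : (a <= b)%N -> upper_banded A a -> upper_banded A b.
Proof. by move=> le_ab hA n m lt; apply: hA; lia. Qed.

Lemma lower_banded_le A a b : (a <= b)%N -> lower_banded A a -> lower_banded A b.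
Proof. by move=> le_ab hA n m lt; apply: hA; lia. Qed.

Lemma upper_banded_idm : upper_banded (idm R) 0.
Proof. by move=> n m lt; rewrite /idm ltn_eqF // -(addn0 n). Qed.

Lemma mmul_upperE A B a n m K : upper_banded A a -> (n + a < K)%N ->
  mmul A B n m = \sum_(j < K) A n j * B j m.
Proof. by move=> hA hK; apply: fsumE => j hj; rewrite hA ?mul0r //; lia. Qed.

Lemma upper_banded_mmul A B a b :
  upper_banded A a -> upper_banded B b -> upper_banded (mmul A B) (a + b).
Proof.
move=> hA hB n m lt; apply: fsum0 => j.
by case: (leqP j (n + a)) => hj; [rewrite hB ?mulr0 //; lia | rewrite hA ?mul0r].
Qed.

Lemma lower_banded_mmul A B a b :
  lower_banded A a -> lower_banded B b -> lower_banded (mmul A B) (a + b).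
Proof.
move=> hA hB n m lt; apply: fsum0 => j.
by case: (ltnP (j + a) n) => hj; [rewrite hA ?mul0r | rewrite hB ?mulr0 //; lia].
Qed.

Lemma trm_mmul A B : trm (mmul A B) = mmul (trm B) (trm A).
Proof.
by apply: funext => n; apply: funext => m; congr fsum; apply: funext => j; rewrite mulrC.
Qed.

Lemma trm_idm : trm (idm R) = idm R.
Proof. by apply: funext => n; apply: funext => m; rewrite /trm /idm eq_sym. Qed.

Lemma upper_banded_trm A a : lower_banded A a -> upper_banded (trm A) a.
Proof. by move=> hA n m; apply: hA. Qed.

Lemma lower_banded_trm A a : upper_banded A a -> lower_banded (trm A) a.
Proof. by move=> hA n m; apply: hA. Qed.

Lemma mmul1l A : mmul (idm R) A = A.
Proof.
apply: funext => n; apply: funext => m; rewrite -[RHS](fsum_delta n (A^~ m)).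
by congr fsum; apply: funext => j; rewrite /idm eq_sym.
Qed.

Lemma mmul1r A : mmul A (idm R) = A.
Proof.
apply: funext => n; apply: funext => m; rewrite -[RHS](fsum_delta m (A n)).
by congr fsum; apply: funext => j; rewrite mulrC.
Qed.

Lemma mmulZl c A B : mmul (fun n m => c * A n m) B = fun n m => c * mmul A B n m.
Proof.
apply: funext => n; apply: funext => m; rewrite /mmul -fsumZ.
by congr fsum; apply: funext => j; rewrite mulrA.
Qed.

Lemma mmulA_at A B D n m J K :
  (forall j, (J <= j)%N -> A n j = 0) ->
  (forall j k, (j < J)%N -> (K <= k)%N -> B j k * D k m = 0) ->
  mmul (mmul A B) D n m = mmul A (mmul B D) n m.
Proof.
move=> hA hBD.
have AB_E k : mmul A B n k = \sum_(j < J) A n j * B j k.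
  by apply: fsumE => j /hA ->; rewrite mul0r.
have BD_E j : (j < J)%N -> mmul B D j m = \sum_(k < K) B j k * D k m.
  by move=> hj; apply: fsumE => k; apply: hBD.
transitivity (\sum_(k < K) mmul A B n k * D k m).
  apply: fsumE => k hk; rewrite AB_E mulr_suml big1 // => j _.
  by rewrite -mulrA hBD ?mulr0.
rewrite [RHS](fsumE (K:=J)); last by move=> j /hA ->; rewrite mul0r.
under eq_bigr do rewrite AB_E mulr_suml.
rewrite exchange_big /=; apply: eq_bigr => j _.
by rewrite BD_E // mulr_sumr; apply: eq_bigr => k _; rewrite mulrA.
Qed.

Lemma mmulA_upper A B D a b : upper_banded A a -> upper_banded B b ->
  mmul (mmul A B) D = mmul A (mmul B D).
Proof.
move=> hA hB; apply: funext => n; apply: funext => m.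
apply: (mmulA_at (J:=(n + a).+1) (K:=(n + a + b).+1)) => [j hj|j k hj hk].
  by apply: hA; lia.
by rewrite hB ?mul0r //; lia.
Qed.

Lemma mmulA_upper_lower A B D a d : upper_banded A a -> lower_banded D d ->
  mmul (mmul A B) D = mmul A (mmul B D).
Proof.
move=> hA hD; apply: funext => n; apply: funext => m.
apply: (mmulA_at (J:=(n + a).+1) (K:=(m + d).+1)) => [j hj|j k hj hk].
  by apply: hA; lia.
by rewrite hD ?mulr0 //; lia.
Qed.

Lemma mmulA_lower A B D b d : lower_banded B b -> lower_banded D d ->
  mmul (mmul A B) D = mmul A (mmul B D).
Proof.
move=> hB hD.
have e : trm (mmul (mmul A B) D) = trm (mmul A (mmul B D)).
  rewrite !trm_mmul -(mmulA_upper _ (upper_banded_trm hD) (upper_banded_trm hB)).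
  by rewrite -trm_mmul.
by rewrite -[LHS]/(trm (trm (mmul (mmul A B) D))) e.
Qed.

Lemma upper_banded_sum q (c : 'I_q -> C) (F : 'I_q -> imat) a :
  (forall i, upper_banded (F i) a) -> upper_banded (fun n m => \sum_i c i * F i n m) a.
Proof. by move=> hF n m lt; rewrite big1 // => i _; rewrite hF ?mulr0. Qed.

Lemma mmul_suml q (c : 'I_q -> C) (F : 'I_q -> imat) a B :
  (forall i, upper_banded (F i) a) ->
  mmul (fun n m => \sum_i c i * F i n m) B = fun n m => \sum_i c i * mmul (F i) B n m.
Proof.
move=> hF; apply: funext => n; apply: funext => m.
rewrite (mmul_upperE _ _ (upper_banded_sum c hF) (ltnSn _)).
under eq_bigr do rewrite mulr_suml.
rewrite exchange_big /=; apply: eq_bigr => i _.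
rewrite (mmul_upperE _ _ (hF i) (ltnSn _)) mulr_sumr.
by apply: eq_bigr => j _; rewrite mulrA.
Qed.

Lemma mmul_sumr q (c : 'I_q -> C) (F : 'I_q -> imat) A a :
  upper_banded A a ->
  mmul A (fun n m => \sum_i c i * F i n m) = fun n m => \sum_i c i * mmul A (F i) n m.
Proof.
move=> hA; apply: funext => n; apply: funext => m.
rewrite (mmul_upperE _ _ hA (ltnSn _)).
under eq_bigr do rewrite mulr_sumr.
rewrite exchange_big /=; apply: eq_bigr => i _.
rewrite (mmul_upperE _ _ hA (ltnSn _)) mulr_sumr.
by apply: eq_bigr => j _; rewrite mulrCA.
Qed.

Definition colv x : imat := fun j _ => x j.

Lemma mvmulA A B x a b : upper_banded A a -> upper_banded B b ->
  mvmul A (mvmul B x) = mvmul (mmul A B) x.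
Proof.
move=> hA hB; apply: funext => n.
by rewrite -[LHS]/(mmul A (mmul B (colv x)) n 0%N) -(mmulA_upper _ hA hB).
Qed.

Lemma mvmulE A x a n K : upper_banded A a -> (n + a < K)%N ->
  mvmul A x n = \sum_(j < K) A n j * x j.
Proof. by move=> hA hK; apply: fsumE => j hj; rewrite hA ?mul0r //; lia. Qed.

Lemma mvmulZ A x c a : upper_banded A a ->
  mvmul A (fun j => c * x j) = fun n => c * mvmul A x n.
Proof.
move=> hA; apply: funext => n; rewrite !(mvmulE _ hA (ltnSn (n + a))) mulr_sumr.
by apply: eq_bigr => j _; rewrite mulrCA.
Qed.

Lemma mvmulD A x y a : upper_banded A a ->
  mvmul A (fun j => x j + y j) = fun n => mvmul A x n + mvmul A y n.
Proof.
move=> hA; apply: funext => n; rewrite !(mvmulE _ hA (ltnSn (n + a))) -big_split.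
by apply: eq_bigr => j _; rewrite mulrDr.
Qed.

Lemma mvmul1 x : mvmul (idm R) x = x.
Proof. by apply: funext => n; rewrite -[LHS]/(mmul (idm R) (colv x) n 0%N) mmul1l. Qed.

(** * Inverses of lower triangular matrices *)

Lemma trunc_mmul A B K : upper_banded A 0 -> trunc (mmul A B) K = trunc A K *m trunc B K.
Proof.
move=> hA; apply/matrixP => i j; rewrite !mxE (mmul_upperE _ _ hA (_ : i + 0 < K)%N) ?addn0 //.
by apply: eq_bigr => k _; rewrite !mxE.
Qed.

Section LowerTriangularInverse.
Variable A : imat.
Hypotheses (A_upper : upper_banded A 0) (A_diag : forall n, A n n != 0).

Lemma trunc_unitmx K : trunc A K \in unitmx.
Proof.
rewrite unitmxE det_trig; last by apply/is_trig_mxP => i j lt; rewrite mxE A_upper ?addn0.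
by rewrite unitfE; apply/prodf_neq0 => i _; rewrite mxE.
Qed.

Let tinv K n m := invmx (trunc A K.+1) (inord n) (inord m).

Lemma sum_mul_tinv K i j : (i <= K)%N -> (j <= K)%N ->
  \sum_(k < K.+1) A i k * tinv K k j = (i == j)%:R.
Proof.
move=> hi hj.
have := congr1 (fun P : 'M_K.+1 => P (inord i) (inord j)) (mulmxV (trunc_unitmx K.+1)).
rewrite /= !mxE -(inj_eq val_inj) /= !inordK // => <-.
by apply: eq_bigr => k _; rewrite mxE inordK // /tinv inord_val.
Qed.

Lemma sum_tinv_mul K i j : (i <= K)%N -> (j <= K)%N ->
  \sum_(k < K.+1) tinv K i k * A k j = (i == j)%:R.
Proof.
move=> hi hj.
have := congr1 (fun P : 'M_K.+1 => P (inord i) (inord j)) (mulVmx (trunc_unitmx K.+1)).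
rewrite /= !mxE -(inj_eq val_inj) /= !inordK // => <-.
by apply: eq_bigr => k _; rewrite [trunc _ _ _ _]mxE inordK // /tinv inord_val.
Qed.

Lemma tinv_eq0 K i j : (i < j)%N -> (j <= K)%N -> tinv K i j = 0.
Proof.
move=> + hj; elim/ltn_ind: i => i IH lt_ij.
have hiK : (i < K.+1)%N by lia.
have := sum_mul_tinv (ltnW (leq_trans lt_ij hj)) hj.
rewrite (ltn_eqF lt_ij) (bigD1 (Ordinal hiK)) //= big1 ?addr0 => [/eqP|k].
  by rewrite mulf_eq0 (negbTE (A_diag i)) => /eqP.
rewrite -(inj_eq val_inj) /=; case: (ltngtP k i) => // [lt_ki|lt_ik] _.
  by rewrite IH ?mulr0 //; lia.
by rewrite A_upper ?mul0r ?addn0.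
Qed.

Lemma tinv_widen K K' n m : (n <= K)%N -> (m <= K)%N -> (K <= K')%N ->
  tinv K n m = tinv K' n m.
Proof.
move=> hn hm hK.
pose W := \matrix_(i < K.+1, j < K.+1) tinv K' i j.
rewrite {1}/tinv; suff -> : invmx (trunc A K.+1) = W by rewrite mxE !inordK.
rewrite -[RHS](mulKmx (trunc_unitmx K.+1)); suff -> : trunc A K.+1 *m W = 1%:M by rewrite mulmx1.
apply/matrixP => i j; rewrite !mxE.
have tail L : (K.+1 <= L)%N -> forall k, (L <= k)%N -> A i k * tinv K' k j = 0.
  by move=> hL k hk; rewrite A_upper ?mul0r //; have := ltn_ord i; lia.
transitivity (\sum_(k < K.+1) A i k * tinv K' k j).
  by apply: eq_bigr => k _; rewrite !mxE.
rewrite -(fsumE (tail _ (leqnn _))) (fsumE (tail K'.+1 _)) ?ltnS // sum_mul_tinv //.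
by have := ltn_ord i; lia.
by have := ltn_ord j; lia.
Qed.

Lemma ltinvE K n m : (n <= K)%N -> (m <= K)%N -> ltinv A n m = tinv K n m.
Proof. by move=> hn hm; apply: tinv_widen; rewrite ?leq_maxl ?leq_maxr ?geq_max ?hn. Qed.

Lemma upper_banded_ltinv : upper_banded (ltinv A) 0.
Proof. by move=> n m; rewrite addn0 => lt; rewrite (ltinvE (K:=m)) ?tinv_eq0 // ltnW. Qed.

Lemma mmul_ltinv_r : mmul A (ltinv A) = idm R.
Proof.
apply: funext => n; apply: funext => m; set K := maxn n m.
have hK : (n + 0 < K.+1)%N by rewrite addn0 ltnS leq_maxl.
rewrite (mmul_upperE _ _ A_upper hK).
rewrite /idm -(sum_mul_tinv (K:=K)) ?leq_maxl ?leq_maxr //.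
by apply: eq_bigr => k _; rewrite (ltinvE (K:=K)) ?leq_maxr // -ltnS.
Qed.

Lemma mmul_ltinv_l : mmul (ltinv A) A = idm R.
Proof.
apply: funext => n; apply: funext => m; set K := maxn n m.
have hK : (n + 0 < K.+1)%N by rewrite addn0 ltnS leq_maxl.
rewrite (mmul_upperE _ _ upper_banded_ltinv hK).
rewrite /idm -(sum_tinv_mul (K:=K)) ?leq_maxl ?leq_maxr //.
by apply: eq_bigr => k _; rewrite (ltinvE (K:=K)) ?leq_maxl // -ltnS.
Qed.

End LowerTriangularInverse.

Lemma upper_banded_diagonal A : diagonal_mx A -> upper_banded A 0.
Proof. by move=> hA n m lt; rewrite hA // ltn_eqF // -(addn0 n). Qed.

Lemma lower_banded_diagonal A : diagonal_mx A -> lower_banded A 0.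
Proof. by move=> hA n m lt; rewrite hA // gtn_eqF // -(addn0 m). Qed.

Lemma trm_diagonal A : diagonal_mx A -> trm A = A.
Proof.
move=> hA; apply: funext => n; apply: funext => m; rewrite /trm.
by have [->|ne] := eqVneq n m; rewrite // !hA // eq_sym.
Qed.

Lemma upper_banded_unitriangular A : lower_unitriangular A -> upper_banded A 0.
Proof. by move=> A_lu n m; rewrite addn0 => /(A_lu n m).1. Qed.

Lemma unitriangular_diag_neq0 A : lower_unitriangular A -> forall n, A n n != 0.
Proof. by move=> A_lu n; rewrite (A_lu n n).2 oner_neq0. Qed.

Lemma diagonal_ltinv D : diagonal_mx D -> (forall n, D n n != 0) -> diagonal_mx (ltinv D).
Proof.
move=> Ddiag Dn0 n m; have Dup := upper_banded_diagonal Ddiag.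
case: ltngtP => // [lt_nm|lt_mn] _; first by rewrite upper_banded_ltinv ?addn0.
have e : mmul (ltinv D) D n m = ltinv D n m * D m m.
  rewrite /mmul (fsumE (K:=m.+1)) => [|j hj]; last by rewrite Ddiag ?mulr0 // gtn_eqF.
  by rewrite big_ord_recr /= big1 ?add0r // => j _; rewrite Ddiag ?mulr0 // ltn_eqF.
move: e; rewrite mmul_ltinv_l // /idm gtn_eqF // => /esym/eqP.
by rewrite mulf_eq0 (negbTE (Dn0 m)) orbF => /eqP.
Qed.

(** * The shift and Pascal matrices, and conjugation *)

Lemma upper_banded_mpow X a i : upper_banded X a -> upper_banded (mpow X i) (i * a).
Proof.
move=> hX; elim: i => [|i IH]; first exact: upper_banded_idm.
by rewrite mulSn; apply: upper_banded_mmul.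
Qed.

Lemma upper_banded_Lam : upper_banded (Lam R) 1.
Proof. by move=> n m lt; rewrite /Lam gtn_eqF // -addn1. Qed.

Lemma mpow_Lam i : mpow (Lam R) i = fun n m => (m == (n + i)%N)%:R.
Proof.
elim: i => [|i IH]; apply: funext => n; apply: funext => m.
  by rewrite /mpow /idm /= addn0 eq_sym.
rewrite -[LHS]/(fsum (fun j => (j == n.+1)%:R * mpow (Lam R) i j m)).
by rewrite fsum_delta IH addSnnS.
Qed.

Lemma polymx_LamE p n m :
  polymx p (Lam R) n m = \sum_(i < size p) p`_i * (m == (n + i)%N)%:R.
Proof. by apply: eq_bigr => i _; rewrite mpow_Lam. Qed.

Lemma upper_banded_polymx_Lam p : upper_banded (polymx p (Lam R)) (size p).-1.
Proof.
move=> n m lt; rewrite polymx_LamE big1 // => i _.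
by rewrite gtn_eqF ?mulr0 //; have := ltn_ord i; lia.
Qed.

Lemma polymx_Lam_Xv p z : mvmul (polymx p (Lam R)) (Xv z) = fun n => p.[z] * z ^+ n.
Proof.
apply: funext => n; rewrite (mvmulE _ (upper_banded_polymx_Lam (p:=p)) (ltnSn _)).
under eq_bigr do rewrite polymx_LamE mulr_suml.
rewrite exchange_big horner_coef mulr_suml /=; apply: eq_bigr => i _.
under eq_bigr do rewrite -mulrA.
rewrite -(fsumE (u := fun j => p`_i * ((j == (n + i)%N)%:R * z ^+ j))) => [|j hj].
  by rewrite fsumZ fsum_delta exprD; ring.
by rewrite gtn_eqF ?mul0r ?mulr0 //; have := ltn_ord i; lia.
Qed.

Lemma upper_banded_pascal : upper_banded (pascal R) 0.
Proof. by move=> n m lt; rewrite /pascal bin_small // -(addn0 n). Qed.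

Lemma pascal_diag_neq0 n : pascal R n n != 0.
Proof. by rewrite /pascal binn oner_neq0. Qed.

Lemma pascal_Xv z : mvmul (pascal R) (Xv z) = Xv (z + 1).
Proof.
apply: funext => n; rewrite (mvmulE _ upper_banded_pascal (ltnSn _)) /Xv exprD1n addn0.
by apply: eq_bigr => j _; rewrite /pascal mulr_natl.
Qed.

Lemma ltinv_pascal_Xv z : mvmul (ltinv (pascal R)) (Xv z) = Xv (z - 1).
Proof.
have -> : Xv z = mvmul (pascal R) (Xv (z - 1)) by rewrite pascal_Xv subrK.
have Li := upper_banded_ltinv upper_banded_pascal pascal_diag_neq0.
rewrite (mvmulA _ Li upper_banded_pascal).
by rewrite (mmul_ltinv_l upper_banded_pascal pascal_diag_neq0) mvmul1.
Qed.

Definition ltconj S X := mmul (mmul S X) (ltinv S).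

Section Conjugation.
Variable S : imat.
Hypotheses (S_upper : upper_banded S 0) (S_diag : forall n, S n n != 0).
Let Si_upper := upper_banded_ltinv S_upper S_diag.

Lemma upper_banded_ltconj X a : upper_banded X a -> upper_banded (ltconj S X) a.
Proof.
move=> hX; apply: upper_banded_le (upper_banded_mmul (upper_banded_mmul S_upper hX) Si_upper).
by rewrite add0n addn0.
Qed.

Lemma ltconj_mmul X Y a b : upper_banded X a -> upper_banded Y b ->
  mmul (ltconj S X) (ltconj S Y) = ltconj S (mmul X Y).
Proof.
move=> hX hY; rewrite /ltconj.
have SX := upper_banded_mmul S_upper hX; have SY := upper_banded_mmul S_upper hY.
rewrite -(mmulA_upper _ (upper_banded_mmul SX Si_upper) SY) (mmulA_upper _ SX Si_upper).
by rewrite -(mmulA_upper _ Si_upper S_upper) mmul_ltinv_l // mmul1l (mmulA_upper _ S_upper hX).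
Qed.

Lemma mpow_ltconj X a i : upper_banded X a -> mpow (ltconj S X) i = ltconj S (mpow X i).
Proof.
move=> hX; elim: i => [|i IH]; first by rewrite /ltconj mmul1r mmul_ltinv_r.
by rewrite [LHS]/= -/(mpow _ i) IH (ltconj_mmul hX (upper_banded_mpow (i:=i) hX)).
Qed.

Lemma polymx_ltconj p X a : upper_banded X a -> polymx p (ltconj S X) = ltconj S (polymx p X).
Proof.
move=> hX; have Xi_upper (i : 'I_(size p)) : upper_banded (mpow X i) (size p * a).
  by apply: upper_banded_le (upper_banded_mpow (i:=i) hX); rewrite leq_mul2r ltnW ?orbT.
rewrite /ltconj {2}/polymx (mmul_sumr (fun i => p`_i) (fun i => mpow X i) S_upper).
rewrite (mmul_suml _ _ (fun i => upper_banded_mmul S_upper (Xi_upper i))).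
apply: funext => n; apply: funext => m; apply: eq_bigr => i _.
by rewrite (mpow_ltconj _ hX).
Qed.

Lemma mvmul_ltconj X a x : upper_banded X a ->
  mvmul (ltconj S X) (mvmul S x) = mvmul S (mvmul X x).
Proof.
move=> hX; have SX := upper_banded_mmul S_upper hX.
rewrite (mvmulA _ (upper_banded_mmul SX Si_upper) S_upper) (mmulA_upper _ SX Si_upper).
by rewrite mmul_ltinv_l // mmul1r (mvmulA _ S_upper hX).
Qed.

End Conjugation.

Definition backshift_mx p := mmul (ltinv (pascal R)) (polymx p (Lam R)).

Lemma upper_banded_backshift_mx p : upper_banded (backshift_mx p) (size p).-1.
Proof.
exact: upper_banded_mmul (upper_banded_ltinv upper_banded_pascal pascal_diag_neq0)
  (upper_banded_polymx_Lam (p:=p)).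
Qed.

Lemma backshift_mx_Xv p z :
  mvmul (backshift_mx p) (Xv z) = fun n => p.[z] * (z - 1) ^+ n.
Proof.
have Li := upper_banded_ltinv upper_banded_pascal pascal_diag_neq0.
rewrite -(mvmulA _ Li (upper_banded_polymx_Lam (p:=p))) polymx_Lam_Xv.
by rewrite (mvmulZ _ _ Li) ltinv_pascal_Xv.
Qed.

Section LaguerreFreudMatrix.
Variables (S : imat) (p : {poly C}).
Hypotheses (S_upper : upper_banded S 0) (S_diag : forall n, S n n != 0).

Lemma LFmatrix_ltconj : LFmatrix S p = ltconj S (backshift_mx p).
Proof.
rewrite /LFmatrix -[Piinv S]/(ltconj S _) -[Jacobi S]/(ltconj S (Lam R)).
have Li := upper_banded_ltinv upper_banded_pascal pascal_diag_neq0.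
rewrite (polymx_ltconj S_upper S_diag p upper_banded_Lam).
by rewrite (ltconj_mmul S_upper S_diag Li (upper_banded_polymx_Lam (p:=p))).
Qed.

Lemma upper_banded_LFmatrix : upper_banded (LFmatrix S p) (size p).-1.
Proof. by rewrite LFmatrix_ltconj; apply/upper_banded_ltconj/upper_banded_backshift_mx. Qed.

Lemma LFmatrix_typeII z : mvmul (LFmatrix S p) (typeII S z) = fun n => p.[z] * typeII S (z - 1) n.
Proof.
rewrite LFmatrix_ltconj /typeII (mvmul_ltconj S_upper S_diag _ (upper_banded_backshift_mx (p:=p))).
by rewrite backshift_mx_Xv (mvmulZ _ _ S_upper).
Qed.

End LaguerreFreudMatrix.

(** * The Pearson matrix *)

Lemma sum_ord_double K (f : nat -> C) :
  \sum_(j < K.*2) f j = \sum_(b < K) (f b.*2 + f b.*2.+1).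
Proof.
elim: K => [|K IH]; first by rewrite !big_ord0.
by rewrite doubleS !big_ord_recr /= IH -addrA.
Qed.

(* Row m = 2k + a - 1 of [pearson_mx] holds the coefficients of sigma^(a) (X + 1)^k
   in the columns of the parity of m, so that U X^(a)(z) = sigma^(a)(z) X^(a)(z + 1). *)
Definition pearson_poly (s1 s2 : {poly C}) m := (if odd m then s2 else s1) * ('X + 1) ^+ m./2.

Definition pearson_mx (s1 s2 : {poly C}) : imat :=
  fun m l => if odd m == odd l then (pearson_poly s1 s2 m)`_l./2 else 0.

Section PearsonMatrix.
Variables s1 s2 : {poly C}.
Local Notation Ms := (maxn (size s1) (size s2)).
Local Notation U := (pearson_mx s1 s2).

Lemma size_pearson_poly m : (size (pearson_poly s1 s2 m) <= m./2 + Ms)%N.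
Proof.
apply: leq_trans (size_polyMleq _ _) _.
have s_le : (size (if odd m then s2 else s1) <= Ms)%N by case: odd; rewrite ?leq_maxl ?leq_maxr.
have := size_poly_exp_leq ('X + 1 : {poly C}) m./2; rewrite size_XaddC /= mul1n.
by move: s_le; move: (size _) (size _) Ms => a b c; lia.
Qed.

Lemma upper_banded_pearson_mx : upper_banded U (2 * Ms.-1).
Proof.
move=> m l lt; rewrite /pearson_mx; case: eqP => // par.
apply/nth_default/(leq_trans (size_pearson_poly m)).
by move: lt; rewrite -{1}(odd_double_half m) -{1}(odd_double_half l) par; lia.
Qed.

Lemma pearson_mxE x m :
  mvmul U x m = \sum_(b < (m./2 + Ms).+1) (U m b.*2 * x b.*2 + U m b.*2.+1 * x b.*2.+1).
Proof.
rewrite (mvmulE _ upper_banded_pearson_mx (_ : _ < (m./2 + Ms).+1.*2)%N).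
  exact: (sum_ord_double _ (fun j => U m j * x j)).
by have := odd_double_half m; move: (odd m) (m./2) => b k <-; case: b; lia.
Qed.

Lemma pearson_mx_X1v z : mvmul U (X1v z) = fun m => s1.[z] * X1v (z + 1) m.
Proof.
apply: funext => m; rewrite pearson_mxE /X1v /pearson_mx.
have [odd_m|even_m] := boolP (odd m).
  by rewrite mulr0 big1 // => b _; rewrite /= !odd_double /= mul0r mulr0 addr0.
have -> : s1.[z] * (z + 1) ^+ m./2 = (pearson_poly s1 s2 m).[z].
  by rewrite /pearson_poly (negbTE even_m) hornerM horner_exp hornerD hornerX hornerC.
rewrite (horner_coef_wide z (leq_trans (size_pearson_poly m) (leqnSn _))).
by apply: eq_bigr => b _; rewrite /= !odd_double /= doubleK mulr0 addr0.
Qed.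

Lemma pearson_mx_X2v z : mvmul U (X2v z) = fun m => s2.[z] * X2v (z + 1) m.
Proof.
apply: funext => m; rewrite pearson_mxE /X2v /pearson_mx.
have [odd_m|even_m] := boolP (odd m); last first.
  by rewrite mulr0 big1 // => b _; rewrite /= !odd_double /= mulr0 mul0r addr0.
have -> : s2.[z] * (z + 1) ^+ m./2 = (pearson_poly s1 s2 m).[z].
  by rewrite /pearson_poly odd_m hornerM horner_exp hornerD hornerX hornerC.
rewrite (horner_coef_wide z (leq_trans (size_pearson_poly m) (leqnSn _))).
by apply: eq_bigr => b _; rewrite /= !odd_double /= uphalf_double mul0r add0r.
Qed.

End PearsonMatrix.

(** * Complex series *)

Definition Re_seq u : R ^nat := fun k => complex.Re (u k).
Definition Im_seq u : R ^nat := fun k => complex.Im (u k).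
Definition csummable u := cvgn (series (Re_seq u)) /\ cvgn (series (Im_seq u)).

Lemma csumE u : csum u = limn (series (Re_seq u)) +i* limn (series (Im_seq u)).
Proof. by []. Qed.

Lemma abs_summable_csummable u : abs_summable u -> csummable u.
Proof.
have le_cmod (z : C) : `|complex.Re z| <= cmod z /\ `|complex.Im z| <= cmod z.
  have cmod_ge0 : 0 <= complex.Re z ^+ 2 + complex.Im z ^+ 2 by rewrite addr_ge0 ?sqr_ge0.
  by split; rewrite /cmod -sqrtr_sqr ler_sqrt // ?lerDl ?lerDr sqr_ge0.
move=> su; split; apply: normed_cvg; apply: (series_le_cvg _ _ _ su) => k /=;
  first [exact: normr_ge0 | exact: sqrtr_ge0 | exact: (le_cmod (u k)).1 | exact: (le_cmod (u k)).2].
Qed.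

Lemma csumD u v : csummable u -> csummable v ->
  csummable (fun k => u k + v k) /\ csum (fun k => u k + v k) = csum u + csum v.
Proof.
move=> [u1 u2] [v1 v2].
have ReD : Re_seq (fun k => u k + v k) = Re_seq u + Re_seq v.
  by rewrite addrfctE; apply: funext => k; rewrite /Re_seq; case: (u k) (v k) => [? ?] [? ?].
have ImD : Im_seq (fun k => u k + v k) = Im_seq u + Im_seq v.
  by rewrite addrfctE; apply: funext => k; rewrite /Im_seq; case: (u k) (v k) => [? ?] [? ?].
split; first by rewrite /csummable ReD ImD; split; apply: is_cvg_seriesD.
by rewrite !csumE ReD ImD !lim_seriesD.
Qed.

Lemma csumZ c u : csummable u ->
  csummable (fun k => c * u k) /\ csum (fun k => c * u k) = c * csum u.
Proof.
move=> [u1 u2].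
have ReZ : Re_seq (fun k => c * u k) = complex.Re c *: Re_seq u - complex.Im c *: Im_seq u.
  rewrite addrfctE opprfctE !scalrfctE; apply: funext => k.
  by rewrite /Re_seq /Im_seq; case: (u k) => ? ?; case: c.
have ImZ : Im_seq (fun k => c * u k) = complex.Re c *: Im_seq u + complex.Im c *: Re_seq u.
  rewrite addrfctE !scalrfctE; apply: funext => k.
  by rewrite /Re_seq /Im_seq; case: (u k) => ? ?; clear ReZ; case: c.
split.
  rewrite /csummable ReZ ImZ.
  by split; [apply: is_cvg_seriesB | apply: is_cvg_seriesD]; apply: is_cvg_seriesZ.
have := is_cvg_seriesZ (k := complex.Re c) u1; have := is_cvg_seriesZ (k := complex.Im c) u2.
have := is_cvg_seriesZ (k := complex.Re c) u2; have := is_cvg_seriesZ (k := complex.Im c) u1.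
move=> c1 c2 c3 c4; rewrite !csumE ReZ ImZ lim_seriesB // lim_seriesD // !lim_seriesZ //.
by clear ReZ ImZ c1 c2 c3 c4; case: c.
Qed.

Lemma csum0 : csummable (fun _ => 0 : C) /\ csum (fun _ => 0 : C) = 0.
Proof.
have series0 : series (Re_seq (fun _ => 0 : C)) = cst 0.
  by apply: funext => n; rewrite /series /= big1.
rewrite /csummable csumE -[Im_seq _]/(Re_seq (fun _ => 0 : C)) series0.
by split; [split; exact: is_cvg_cst | rewrite lim_cst].
Qed.

Lemma csum_lincomb J (c : nat -> C) (F : nat -> nat -> C) :
  (forall j, (j < J)%N -> csummable (F j)) ->
  csummable (fun k => \sum_(j < J) c j * F j k) /\
  csum (fun k => \sum_(j < J) c j * F j k) = \sum_(j < J) c j * csum (F j).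
Proof.
elim: J => [|J IH] sF.
  under eq_fun do rewrite big_ord0.
  by rewrite big_ord0; exact: csum0.
under eq_fun do rewrite big_ord_recr.
have [s1 e1] := IH (fun j lt => sF j (ltnW lt)).
have [s2 e2] := csumZ (c J) (sF J (ltnSn J)).
have [s e] := csumD s1 s2.
by rewrite big_ord_recr -e1 -e2.
Qed.

Lemma lim_series_shift (f : R ^nat) : f 0%N = 0 -> cvgn (series f) ->
  limn (series (fun k => f k.+1)) = limn (series f).
Proof.
move=> f0 cf; have -> : series (fun k => f k.+1) = [sequence series f n.+1]_n.
  by apply: funext => n; rewrite /series /= big_nat_recl // f0 add0r.
by apply: cvg_lim => //; rewrite cvg_shiftS.
Qed.

Lemma csum_shift u : u 0%N = 0 -> csummable u -> csum (fun k => u k.+1) = csum u.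
Proof.
move=> u0 [u1 u2]; rewrite !csumE.
rewrite (lim_series_shift (f := Re_seq u)) ?(lim_series_shift (f := Im_seq u)) //;
  by rewrite /Re_seq /Im_seq u0.
Qed.

Lemma mvmul_csum A a (F : nat -> nat -> C) n :
  upper_banded A a -> (forall j, csummable (F j)) ->
  csummable (fun k => mvmul A (fun j => F j k) n) /\
  mvmul A (fun j => csum (F j)) n = csum (fun k => mvmul A (fun j => F j k) n).
Proof.
move=> hA sF; have [s e] := csum_lincomb (A n) (fun j (_ : (j < (n + a).+1)%N) => sF j).
have -> : (fun k => mvmul A (fun j => F j k) n) = fun k => \sum_(j < (n + a).+1) A n j * F j k.
  by apply: funext => k; rewrite (mvmulE _ hA (ltnSn _)).
by rewrite (mvmulE _ hA (ltnSn _)) e.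
Qed.

(** * The Pearson equations and the Gauss-Borel factorization *)

Section PearsonEquation.
Variables (w1 w2 : nat -> C) (theta s1 s2 : {poly C}).
Hypotheses (abs_moments : forall n m, abs_summable (moment_term w1 w2 n m))
  (pearson1 : forall k, theta.[k.+1%:R] * w1 k.+1 = s1.[k%:R] * w1 k)
  (pearson2 : forall k, theta.[k.+1%:R] * w2 k.+1 = s2.[k%:R] * w2 k)
  (theta0 : theta.[0] = 0).

(* Summation by parts: both entries are the series of
   f k = theta(k) (k - 1)^n W(k), the right one shifted by one, and f 0 = 0. *)
Lemma backshift_mx_moment :
  mmul (backshift_mx theta) (moment w1 w2) = mmul (moment w1 w2) (trm (pearson_mx s1 s2)).
Proof.
apply: funext => n; apply: funext => m.
pose W k : C := w1 k * X1v k%:R m + w2 k * X2v k%:R m.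
pose f k : C := theta.[k%:R] * ((k%:R - 1) ^+ n * W k).
have sM j l : csummable (moment_term w1 w2 j l) := abs_summable_csummable (@abs_moments j l).
have Q_upper := upper_banded_backshift_mx (p := theta).
have U_upper := upper_banded_pearson_mx (s1 := s1) (s2 := s2).
have Q_term k : mvmul (backshift_mx theta) (fun j => moment_term w1 w2 j m k) n = f k.
  rewrite (_ : (fun j => _) = fun j => W k * Xv k%:R j); last first.
    by apply: funext => j; rewrite mulrC.
  by rewrite (mvmulZ _ _ Q_upper) backshift_mx_Xv /f; ring.
have U_term k : mvmul (pearson_mx s1 s2) (fun l => moment_term w1 w2 n l k) m = f k.+1.
  rewrite /moment_term (mvmulZ _ _ U_upper) (mvmulD _ _ U_upper) !(mvmulZ _ _ U_upper).
  rewrite pearson_mx_X1v pearson_mx_X2v /f /W -natr1 addrK.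
  have := @pearson1 k; have := @pearson2 k; rewrite -natr1 => P2 P1.
  transitivity ((k%:R : C) ^+ n * ((theta.[k%:R + 1] * w1 k.+1) * X1v (k%:R + 1) m
    + (theta.[k%:R + 1] * w2 k.+1) * X2v (k%:R + 1) m)); first by rewrite P1 P2; ring.
  by ring.
have [sf lhs] := mvmul_csum n Q_upper (fun j => sM j m).
have {}sf : csummable f by move: sf; congr csummable; apply: funext => k; exact: Q_term.
transitivity (csum f).
  by rewrite -[LHS]/(mvmul _ _ n) lhs; congr csum; apply: funext => k; exact: Q_term.
have [_ rhs] := mvmul_csum m U_upper (fun l => sM n l).
transitivity (mvmul (pearson_mx s1 s2) (fun l => csum (moment_term w1 w2 n l)) m).
  rewrite rhs -(csum_shift _ sf); last by rewrite /f mulr0n theta0 mul0r.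
  by congr csum; apply: funext => k; rewrite U_term.
by congr fsum; apply: funext => l; rewrite mulrC.
Qed.

End PearsonEquation.

Section GaussBorelDuality.
Variables (S St H Mom Q U : imat) (q u : nat).
Hypotheses (S_upper : upper_banded S 0) (S_diag : forall n, S n n != 0)
  (St_upper : upper_banded St 0) (St_diag : forall n, St n n != 0)
  (H_diag : diagonal_mx H) (H_neq0 : forall n, H n n != 0)
  (Mom_GB : Mom = mmul (mmul (ltinv S) H) (trm (ltinv St)))
  (Q_upper : upper_banded Q q) (U_upper : upper_banded U u)
  (QMom : mmul Q Mom = mmul Mom (trm U)).

Let Si_upper := upper_banded_ltinv S_upper S_diag.
Let Sti_upper := upper_banded_ltinv St_upper St_diag.
Let H_upper := upper_banded_diagonal H_diag.
Let H_lower := lower_banded_diagonal H_diag.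
Let Hi_diag := diagonal_ltinv H_diag H_neq0.
Let Hi_upper := upper_banded_diagonal Hi_diag.
Let Hi_lower := lower_banded_diagonal Hi_diag.

Definition dual_mx := mmul (mmul (mmul (mmul H (trm (ltinv St))) (trm U)) (trm St)) (ltinv H).

Lemma gauss_borel_ltinv : mmul (mmul Mom (trm St)) (ltinv H) = ltinv S.
Proof.
have SiH := upper_banded_mmul Si_upper H_upper.
rewrite Mom_GB (mmulA_upper_lower _ SiH (lower_banded_trm St_upper)).
rewrite -trm_mmul mmul_ltinv_r // trm_idm mmul1r.
by rewrite (mmulA_upper _ Si_upper H_upper) mmul_ltinv_r // mmul1r.
Qed.

Lemma ltconj_dual_mx : ltconj S Q = dual_mx.
Proof.
have SQ := upper_banded_mmul S_upper Q_upper.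
rewrite /ltconj -gauss_borel_ltinv -(mmulA_upper_lower _ SQ Hi_lower).
rewrite -(mmulA_upper_lower _ SQ (lower_banded_trm St_upper)).
rewrite (mmulA_upper _ S_upper Q_upper) QMom.
rewrite -(mmulA_upper_lower _ S_upper (lower_banded_trm U_upper)).
rewrite Mom_GB -(mmulA_upper _ S_upper (upper_banded_mmul Si_upper H_upper)).
by rewrite -(mmulA_upper _ S_upper Si_upper) mmul_ltinv_r // mmul1l.
Qed.

Lemma lower_banded_dual_mx : lower_banded dual_mx u.
Proof.
apply: lower_banded_le (lower_banded_mmul (lower_banded_mmul (lower_banded_mmul
  (lower_banded_mmul H_lower (lower_banded_trm Sti_upper)) (lower_banded_trm U_upper))
  (lower_banded_trm St_upper)) Hi_lower).
by rewrite !addn0.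
Qed.

Let G := mmul (ltinv H) St.
Let G_upper : upper_banded G 0 := upper_banded_mmul Hi_upper St_upper.

Lemma trmG_dual_mx : mmul (trm G) dual_mx = mmul (mmul (trm U) (trm St)) (ltinv H).
Proof.
have HSti := lower_banded_mmul H_lower (lower_banded_trm Sti_upper).
have GHSti : mmul (trm G) (mmul H (trm (ltinv St))) = idm R.
  rewrite /G trm_mmul (trm_diagonal Hi_diag) (mmulA_lower _ Hi_lower HSti).
  rewrite -(mmulA_lower _ H_lower (lower_banded_trm Sti_upper)) mmul_ltinv_l //.
  by rewrite mmul1l -trm_mmul mmul_ltinv_l // trm_idm.
have HStiU := lower_banded_mmul HSti (lower_banded_trm U_upper).
rewrite /dual_mx -(mmulA_lower _ (lower_banded_mmul HStiU (lower_banded_trm St_upper)) Hi_lower).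
rewrite -(mmulA_lower _ HStiU (lower_banded_trm St_upper)).
by rewrite -(mmulA_lower _ HSti (lower_banded_trm U_upper)) GHSti mmul1l.
Qed.

Lemma typeI_dual_mx (Xa : C -> ivec R) (c z : C) :
  mvmul U (Xa z) = (fun m => c * Xa (z + 1) m) ->
  forall m, typeI H St Xa (z + 1) m * c = vmmul (typeI H St Xa z) dual_mx m.
Proof.
move=> UX m; rewrite /typeI -/G.
have vm x : vmmul (mvmul G x) dual_mx m = mmul (trm (colv x)) (mmul (trm G) dual_mx) 0%N m.
  rewrite -[LHS]/(mmul (trm (mmul G (colv x))) dual_mx 0%N m) trm_mmul.
  by rewrite (mmulA_lower _ (lower_banded_trm G_upper) lower_banded_dual_mx).
rewrite vm trmG_dual_mx -(mmulA_lower _ (lower_banded_mmul (lower_banded_trm U_upper)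
  (lower_banded_trm St_upper)) Hi_lower).
rewrite -(mmulA_lower _ (lower_banded_trm U_upper) (lower_banded_trm St_upper)).
have -> : mmul (trm (colv (Xa z))) (trm U) = fun n m => c * trm (colv (Xa (z + 1))) n m.
  by rewrite -trm_mmul -[mmul U _]/(colv (mvmul U (Xa z))) UX.
rewrite !mmulZl mulrC; congr (_ * _).
rewrite -[LHS]/(trm (mmul G (colv (Xa (z + 1)))) 0%N m) trm_mmul /G trm_mmul.
by rewrite (trm_diagonal Hi_diag) (mmulA_lower _ (lower_banded_trm St_upper) Hi_lower).
Qed.

End GaussBorelDuality.

Lemma gauss_borel_diag_neq0 (Mom S St H : imat) :
  (forall n, \det (trunc Mom n) != 0) ->
  upper_banded S 0 -> (forall n, S n n != 0) -> diagonal_mx H ->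
  Mom = mmul (mmul (ltinv S) H) (trm (ltinv St)) -> forall n, H n n != 0.
Proof.
move=> minors S_upper S_diag H_diag Mom_GB n.
have Si_upper := upper_banded_ltinv S_upper S_diag.
have H_upper := upper_banded_diagonal H_diag.
have := minors n.+1; rewrite Mom_GB (trunc_mmul _ _ (upper_banded_mmul Si_upper H_upper)).
rewrite (trunc_mmul _ _ Si_upper) !det_mulmx (det_trig (A := trunc H n.+1)); last first.
  by apply/is_trig_mxP => i j lt; rewrite mxE H_upper ?addn0.
by apply: contraNneq; rewrite big_ord_recr /= mxE => ->; rewrite !mulr0 mul0r.
Qed.

End LaguerreFreud.

Unset Implicit Arguments.

Theorem mainTheorem7 (R : realType) (w1 w2 : nat -> R[i])
  (S St H : imat R) (theta sigma1 sigma2 : {poly R[i]}) (N M : nat) :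
  (* the moment series converge absolutely *)
  (forall n m, abs_summable (moment_term w1 w2 n m)) ->
  (* all leading principal minors of the moment matrix are nonzero *)
  (forall n, \det (trunc (moment w1 w2) n) != 0) ->
  (* Gauss--Borel factorization  Mom = S^{-1} H Stilde^{-T} *)
  lower_unitriangular S -> lower_unitriangular St -> diagonal_mx H ->
  moment w1 w2 = mmul (mmul (ltinv S) H) (trm (ltinv St)) ->
  (* discrete Pearson equations *)
  (forall k, theta.[(k.+1)%:R] * w1 k.+1 = sigma1.[k%:R] * w1 k) ->
  (forall k, theta.[(k.+1)%:R] * w2 k.+1 = sigma2.[k%:R] * w2 k) ->
  theta.[0] = 0 ->
  size theta = N.+1 ->                          (* deg theta = N *)
  maxn (size sigma1) (size sigma2) = M.+1 ->    (* max(deg sigma1, deg sigma2) = M *)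
  (* Psi is banded: lower bandwidth 2M, upper bandwidth N *)
  (forall n m, (m + 2 * M < n)%N -> LFmatrix S theta n m = 0) /\
  (forall n m, (n + N < m)%N -> LFmatrix S theta n m = 0) /\
  (* theta(z) B(z-1) = Psi B(z) *)
  (forall z n, theta.[z] * typeII S (z - 1) n
               = mvmul (LFmatrix S theta) (typeII S z) n) /\
  (* (A^(1)(z+1))^T sigma1(z) = (A^(1)(z))^T Psi *)
  (forall z m, typeI H St (@X1v R) (z + 1) m * sigma1.[z]
               = vmmul (typeI H St (@X1v R) z) (LFmatrix S theta) m) /\
  (* (A^(2)(z+1))^T sigma2(z) = (A^(2)(z))^T Psi *)
  (forall z m, typeI H St (@X2v R) (z + 1) m * sigma2.[z]
               = vmmul (typeI H St (@X2v R) z) (LFmatrix S theta) m).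
Proof.
move=> abs_moments minors S_lu St_lu H_diag Mom_GB pearson1 pearson2 theta0 size_theta size_sigma.
have S_upper := upper_banded_unitriangular S_lu.
have S_diag := unitriangular_diag_neq0 S_lu.
have St_upper := upper_banded_unitriangular St_lu.
have St_diag := unitriangular_diag_neq0 St_lu.
have H_neq0 := gauss_borel_diag_neq0 minors S_upper S_diag H_diag Mom_GB.
have U_upper := upper_banded_pearson_mx (s1 := sigma1) (s2 := sigma2).
rewrite size_sigma /= in U_upper.
have QMom := backshift_mx_moment abs_moments pearson1 pearson2 theta0.
have Psi_dual : LFmatrix S theta = dual_mx St H (pearson_mx sigma1 sigma2).
  rewrite (LFmatrix_ltconj _ S_upper S_diag).
  have Q_upper := upper_banded_backshift_mx (p := theta).
  exact: (ltconj_dual_mx S_upper S_diag St_upper St_diag H_diag H_neq0 Mom_GB Q_upper U_upper QMom).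
split.
  by rewrite Psi_dual; exact: (lower_banded_dual_mx St_upper St_diag H_diag H_neq0 U_upper).
split; first by move: (upper_banded_LFmatrix (p := theta) S_upper S_diag); rewrite size_theta.
split; first by move=> z n; rewrite (LFmatrix_typeII _ S_upper S_diag).
split=> z m; rewrite Psi_dual; apply: (typeI_dual_mx St_upper St_diag H_diag H_neq0 U_upper).
  exact: pearson_mx_X1v.
exact: pearson_mx_X2v.
Qed.
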